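(* Let $g$ be the Lorentzian form on $\mathbb{R}^4$ with matrix $\mathrm{diag}(1,1,1,-c^2)$, $\mathcal{L}^{\uparrow}_+$ its proper orthochronous Lorentz group, and $u$ a timelike vector. Let $H(u)=\{L\in\mathcal{L}^{\uparrow}_+ : Lu=u\}$ and let $(\mathcal{P}^{\uparrow}_+)_X$ be the group of maps $x\mapsto Lx+b$ with $L\in H(u)$, $b\in\mathbb{R}^4$. Let $CH(u)$ be the set of $M\in\mathbb{R}^+\mathcal{L}^{\uparrow}_+=\{\mu L:\mu>0, L\in\mathcal{L}^{\uparrow}_+\}$ with $M(\langle u\rangle)=\langle u\rangle$, where $\langle u\rangle$ is the line spanned by $u$, and let $C(\mathcal{P}^{\uparrow}_+)_X$ be the group of maps $x\mapsto Mx+b$ with $M\in CH(u)$, $b\in\mathbb{R}^4$. Let $\langle u\rangle^\perp=\{v: g(v,u)=0\}$. (A) An equivalence relation on $\mathbb{R}^4$ is $(\mathcal{P}^{\uparrow}_+)_X$-invariant if and only if there is an additive subgroup $H$ of $\mathbb{R}$ such that either (i) $[x]=x+Hu$ for all $x$, or (ii) $[x]=x+(\langle u\rangle^\perp+Hu)$ for all $x$. (B) The standard synchrony $R_u$, defined by $x\,R_u\,y\iff g(x-y,u)=0$, is the only nontrivial $C(\mathcal{P}^{\uparrow}_+)_X$-invariant equivalence relation on $\mathbb{R}^4$ whose equivalence classes are not worldlines (i.e. not the lines $x+\mathbb{R}u$).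
   Context: An equivalence relation is invariant under a group of transformations if $x\sim y$ implies $h(x)\sim h(y)$ for all $x,y$ and all $h$ in the group. It is trivial if it is the total relation or the identity relation (diagonal). A vector $u$ is timelike if $g(u,u)<0$. *)

From HB Require Import structures.
From mathcomp Require Import all_boot all_order all_algebra.
From mathcomp Require Import reals.
Set Implicit Arguments. Unset Strict Implicit. Unset Printing Implicit Defensive.
Import Order.TTheory GRing.Theory Num.Theory.
Local Open Scope ring_scope.

Section Defs.
Variable R : realType.
Notation vec := 'cV[R]_4.

(* matrix diag(1,1,1,-c^2); index ord_max (= 3) is the time coordinate *)
Definition lorentz_mx (c : R) : 'M[R]_4 :=
  diag_mx (\row_(i < 4) (if i == ord_max then - c ^+ 2 else 1)).

Definition lg (c : R) (x y : vec) : R := (x^T *m lorentz_mx c *m y) 0 0.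

Definition timelike (c : R) (u : vec) : Prop := lg c u u < 0.

Definition proper_orthochronous (c : R) (L : 'M[R]_4) : Prop :=
  L^T *m lorentz_mx c *m L = lorentz_mx c /\ \det L = 1 /\ 0 < L ord_max ord_max.

Definition stabH (c : R) (u : vec) (L : 'M[R]_4) : Prop :=
  proper_orthochronous c L /\ L *m u = u.

Definition PX (c : R) (u : vec) (f : vec -> vec) : Prop :=
  exists L, stabH c u L /\ exists b : vec, forall x, f x = L *m x + b.

Definition span_line (u : vec) (y : vec) : Prop := exists t : R, y = t *: u.

Definition CH (c : R) (u : vec) (M : 'M[R]_4) : Prop :=
  (exists mu : R, 0 < mu /\ exists L, proper_orthochronous c L /\ M = mu *: L) /\
  (forall y, (exists v, span_line u v /\ y = M *m v) <-> span_line u y).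

Definition CPX (c : R) (u : vec) (f : vec -> vec) : Prop :=
  exists M, CH c u M /\ exists b : vec, forall x, f x = M *m x + b.

Definition is_equivalence (E : vec -> vec -> Prop) : Prop :=
  (forall x, E x x) /\ (forall x y, E x y -> E y x) /\
  (forall x y z, E x y -> E y z -> E x z).

Definition invariant_rel (G : (vec -> vec) -> Prop) (E : vec -> vec -> Prop) : Prop :=
  forall h, G h -> forall x y, E x y -> E (h x) (h y).

Definition trivial_rel (E : vec -> vec -> Prop) : Prop :=
  (forall x y, E x y) \/ (forall x y, E x y <-> x = y).

Definition additive_subgroup (H : R -> Prop) : Prop :=
  H 0 /\ (forall a b, H a -> H b -> H (a - b)).

Definition worldline_rel (u : vec) (E : vec -> vec -> Prop) : Prop :=
  forall x y, E x y <-> exists t : R, y = x + t *: u.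

Definition synchrony (c : R) (u : vec) (x y : vec) : Prop := lg c (x - y) u = 0.

End Defs.

From HB Require Import structures.
From mathcomp Require Import all_boot all_order all_algebra.
From mathcomp Require Import boolp reals ring lra.
Set Implicit Arguments.
Unset Strict Implicit.
Unset Printing Implicit Defensive.
Import Order.TTheory GRing.Theory Num.Theory.
Local Open Scope ring_scope.

(* An invariant equivalence relation is determined by the class T of 0, which
   is an additive subgroup of R^4 stable under the stabiliser H(u). The group
   H(u) acts transitively on each sphere g(v, v) = r of the spacelike hyperplane
   <u>^perp (products of two reflections suffice). So if T contains a vector w
   off the line <u>, it contains L w - w for all L in H(u), i.e. every y - v on
   the sphere through the <u>^perp-component v of w, hence every difference of
   two such points, i.e. a ball of <u>^perp, hence all of <u>^perp. Thus T is
   H u or <u>^perp + H u for an additive subgroup H of R. For (B), invariance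
   under the homotheties x |-> mu x forces H = 0 or H = R, and of the four
   resulting relations only R_u is neither trivial nor the worldline relation. *)

Lemma det1D_rank1 (R : comPzRingType) n (a : 'cV[R]_n) (b : 'rV[R]_n) :
  \det (1%:M + a *m b) = 1 + (b *m a) 0 0.
Proof.
have E : block_mx 1%:M 0 b 1%:M *m block_mx (1%:M + a *m b) a 0 1%:M
          *m block_mx 1%:M 0 (- b) 1%:M = block_mx 1%:M a 0 (1%:M + b *m a)
          :> 'M[R]_(n + 1).
  rewrite !mulmx_block !(mul1mx, mulmx1, mul0mx, mulmx0, addr0, add0r).
  rewrite !mulmxN mulmxDr mulmxDl mulmx1 mul1mx mulmxA.
  by rewrite addrK [b *m a *m b + b]addrC subrr [b *m a + _]addrC.
move: (congr1 determinant E).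
rewrite !det_mulmx det_lblock det_ublock !det_ublock !det1 !mul1r mulr1 det_mx11.
rewrite det_lblock !det1 !mulr1 => detE.
by rewrite -[LHS]mulr1 detE !mxE eqxx /= mulr1n mulr1.
Qed.

Lemma ker_neq0 (F : fieldType) m n (A : 'M[F]_(m, n)) : (n < m)%N ->
  exists2 v : 'rV_m, v != 0 & v *m A = 0.
Proof.
move=> lt_nm; have /rowV0Pn[v /sub_kermxP vA0 v0] : kermx A != 0.
  by rewrite kermx_eq0 /row_free neq_ltn (leq_ltn_trans (rank_leq_col A)).
by exists v.
Qed.

Lemma cauchy_schwarz3 (R : realDomainType) (a0 a1 a2 b0 b1 b2 : R) :
  (a0 * b0 + a1 * b1 + a2 * b2) ^+ 2 <=
  (a0 ^+ 2 + a1 ^+ 2 + a2 ^+ 2) * (b0 ^+ 2 + b1 ^+ 2 + b2 ^+ 2).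
Proof.
rewrite -subr_ge0.
have -> : (a0 ^+ 2 + a1 ^+ 2 + a2 ^+ 2) * (b0 ^+ 2 + b1 ^+ 2 + b2 ^+ 2)
    - (a0 * b0 + a1 * b1 + a2 * b2) ^+ 2 =
  (a0 * b1 - a1 * b0) ^+ 2 + (a0 * b2 - a2 * b0) ^+ 2 + (a1 * b2 - a2 * b1) ^+ 2.
  by ring.
by rewrite !addr_ge0 // sqr_ge0.
Qed.

Lemma orth_timelike_coord_eq0 (R : realFieldType) (k v0 v1 v2 v3 u0 u1 u2 u3 : R) :
  0 < k -> u0 * u0 + u1 * u1 + u2 * u2 - k ^+ 2 * (u3 * u3) < 0 ->
  v0 * u0 + v1 * u1 + v2 * u2 - k ^+ 2 * (v3 * u3) = 0 ->
  v0 * v0 + v1 * v1 + v2 * v2 - k ^+ 2 * (v3 * v3) <= 0 ->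
  [/\ v0 = 0, v1 = 0, v2 = 0 & v3 = 0].
Proof.
move=> k_gt0 hu hvu hvv.
have CS := cauchy_schwarz3 v0 v1 v2 u0 u1 u2.
set A := _ + v2 ^+ 2 in CS; set U := _ + u2 ^+ 2 in CS; set p := _ + v2 * u2 in CS hvu.
have A_ge0 : 0 <= A by rewrite !addr_ge0 // sqr_ge0.
have U_ge0 : 0 <= U by rewrite !addr_ge0 // sqr_ge0.
have k2_gt0 : 0 < k ^+ 2 by rewrite exprn_gt0.
have hU : U < k ^+ 2 * (u3 * u3) by rewrite /U; lra.
have hA : A <= k ^+ 2 * (v3 * v3) by rewrite /A; lra.
(* Otherwise p^2 = k^2 v3^2 k^2 u3^2 > A U, against Cauchy-Schwarz. *)
have v3_0 : v3 = 0.
  apply/eqP; apply: contraTT CS => v3_neq0; rewrite -ltNge.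
  have v3v3_gt0 : 0 < k ^+ 2 * (v3 * v3) by rewrite mulr_gt0 // -expr2 exprn_even_gt0.
  have AU : A * U <= k ^+ 2 * (v3 * v3) * U by rewrite ler_wpM2r.
  have : k ^+ 2 * (v3 * v3) * U < k ^+ 2 * (v3 * v3) * (k ^+ 2 * (u3 * u3)).
    by rewrite ltr_pM2l.
  have -> : p ^+ 2 = k ^+ 2 * (v3 * v3) * (k ^+ 2 * (u3 * u3)).
    by rewrite (_ : p = k ^+ 2 * (v3 * u3)); [ring | lra].
  lra.
have : A = 0 by rewrite v3_0 in hA; lra.
have := sqr_ge0 v0; have := sqr_ge0 v1; have := sqr_ge0 v2; rewrite /A => ? ? ? ?.
by split=> //; apply/eqP; rewrite -sqrf_eq0; apply/eqP; lra.
Qed.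

Lemma timelike_coord_future (R : realFieldType) (k a0 a1 a2 a3 u0 u1 u2 u3 : R) :
  0 < k -> a0 * a0 + a1 * a1 + a2 * a2 - k ^+ 2 * (a3 * a3) = - k ^+ 2 ->
  u0 * u0 + u1 * u1 + u2 * u2 - k ^+ 2 * (u3 * u3) < 0 ->
  a0 * u0 + a1 * u1 + a2 * u2 - k ^+ 2 * (a3 * u3) = - k ^+ 2 * u3 -> 0 < a3.
Proof.
move=> k_gt0 ha hu hau.
have CS := cauchy_schwarz3 a0 a1 a2 u0 u1 u2.
set A := _ + a2 ^+ 2 in CS; set U := _ + u2 ^+ 2 in CS; set p := _ + a2 * u2 in CS hau.
have A_ge0 : 0 <= A by rewrite !addr_ge0 // sqr_ge0.
have U_ge0 : 0 <= U by rewrite !addr_ge0 // sqr_ge0.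
have k2_gt0 : 0 < k ^+ 2 by rewrite exprn_gt0.
have hA : A = k ^+ 2 * (a3 * a3) - k ^+ 2 by rewrite /A; lra.
have hU : U < k ^+ 2 * (u3 * u3) by rewrite /U; lra.
have hp : p = k ^+ 2 * u3 * (a3 - 1) by lra.
have Ku_gt0 : 0 < k ^+ 2 * (u3 * u3) by lra.
have AU := le_trans CS (ler_wpM2l A_ge0 (ltW hU)).
have pE : p ^+ 2 = k ^+ 2 * (k ^+ 2 * (u3 * u3)) * (a3 * a3 - 2 * a3 + 1).
  by rewrite hp; ring.
have AE : A * (k ^+ 2 * (u3 * u3)) = k ^+ 2 * (k ^+ 2 * (u3 * u3)) * (a3 * a3 - 1).
  by rewrite hA; ring.
rewrite pE AE ler_pM2l ?(mulr_gt0 k2_gt0 Ku_gt0) in AU; lra.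
Qed.

Section Minkowski.
Variable R : realType.
Variable c : R.
Hypothesis c_gt0 : 0 < c.
Local Notation vec := 'cV[R]_4.
Local Notation G := (lorentz_mx c).

Let i0 : 'I_4 := Ordinal (isT : (0 < 4)%N).
Let i1 : 'I_4 := Ordinal (isT : (1 < 4)%N).
Let i2 : 'I_4 := Ordinal (isT : (2 < 4)%N).
Let i3 : 'I_4 := Ordinal (isT : (3 < 4)%N).

Lemma lgE (x y : vec) : lg c x y =
  x i0 0 * y i0 0 + x i1 0 * y i1 0 + x i2 0 * y i2 0 - c ^+ 2 * (x i3 0 * y i3 0).
Proof.
rewrite /lg /lorentz_mx mul_mx_diag !mxE !big_ord_recr big_ord0 /= !mxE /=.
have -> : ord_max = i3 by apply/val_inj.
have -> : widen_ord (leqnSn 3) (widen_ord (leqnSn 2)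
    (widen_ord (leqnSn 1) (ord_max : 'I_1))) = i0 by apply/val_inj.
have -> : widen_ord (leqnSn 3) (widen_ord (leqnSn 2) (ord_max : 'I_2)) = i1.
  exact/val_inj.
have -> : widen_ord (leqnSn 3) (ord_max : 'I_3) = i2 by apply/val_inj.
ring.
Qed.

Lemma col4_eq0 (v : vec) : v i0 0 = 0 -> v i1 0 = 0 -> v i2 0 = 0 -> v i3 0 = 0 -> v = 0.
Proof.
move=> h0 h1 h2 h3; apply/matrixP => i j; rewrite (ord1 j) mxE.
by case: i => [[|[|[|[|k]]]] hi] //; [rewrite -h0 | rewrite -h1 | rewrite -h2 | rewrite -h3];
  congr (v _ _); apply/val_inj.
Qed.

Lemma lg_sym x y : lg c x y = lg c y x.
Proof. by rewrite !lgE; ring. Qed.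
Lemma lgDl x y z : lg c (x + y) z = lg c x z + lg c y z.
Proof. by rewrite !lgE !mxE; ring. Qed.
Lemma lgDr x y z : lg c z (x + y) = lg c z x + lg c z y.
Proof. by rewrite !lgE !mxE; ring. Qed.
Lemma lgBl x y z : lg c (x - y) z = lg c x z - lg c y z.
Proof. by rewrite !lgE !mxE; ring. Qed.
Lemma lgBr x y z : lg c z (x - y) = lg c z x - lg c z y.
Proof. by rewrite !lgE !mxE; ring. Qed.
Lemma lgNl x z : lg c (- x) z = - lg c x z.
Proof. by rewrite !lgE !mxE; ring. Qed.
Lemma lgZl a x z : lg c (a *: x) z = a * lg c x z.
Proof. by rewrite !lgE !mxE; ring. Qed.
Lemma lgZr a x z : lg c z (a *: x) = a * lg c z x.
Proof. by rewrite !lgE !mxE; ring. Qed.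
Lemma lg0l z : lg c 0 z = 0.
Proof. by rewrite !lgE !mxE; ring. Qed.

Lemma lorentz_mxP (L : 'M[R]_4) :
  L^T *m G *m L = G <-> forall x y, lg c (L *m x) (L *m y) = lg c x y.
Proof.
have lgE' x y : lg c (L *m x) (L *m y) = (x^T *m (L^T *m G *m L) *m y) 0 0.
  by rewrite /lg trmx_mul !mulmxA.
split=> [LG x y | Lg]; first by rewrite lgE' LG.
have entryE (A : 'M[R]_4) i j :
    A i j = ((delta_mx i 0 : vec)^T *m A *m (delta_mx j 0 : vec)) 0 0.
  by rewrite trmx_delta -rowE -colE !mxE.
by apply/matrixP => i j; rewrite entryE [RHS]entryE -[RHS]/(lg c _ _) -Lg lgE'.
Qed.

Definition reflection (a : vec) : 'M[R]_4 := 1%:M - (2 / lg c a a) *: (a *m (a^T *m G)).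

Lemma reflectionE a x : reflection a *m x = x - (2 * lg c a x / lg c a a) *: a.
Proof.
rewrite mulmxBl mul1mx -scalemxAl -mulmxA [a^T *m G *m x]mx11_scalar mul_mx_scalar.
by rewrite scalerA mulrAC mulrC.
Qed.

Lemma reflection_lorentz a : lg c a a != 0 -> (reflection a)^T *m G *m reflection a = G.
Proof.
move=> a_ns; apply/lorentz_mxP => x y.
rewrite !reflectionE !(lgBl, lgBr, lgZl, lgZr) (lg_sym x a) ?(lg_sym y a).
by field.
Qed.

Lemma det_reflection a : lg c a a != 0 -> \det (reflection a) = -1.
Proof.
move=> a_ns.
have -> : reflection a = 1%:M + a *m ((- (2 / lg c a a)) *: (a^T *m G)).
  by rewrite /reflection -scalemxAr scaleNr.
rewrite det1D_rank1 -scalemxAl mxE mulNr divfK // (_ : 2 = 1 + 1 :> R) //; ring.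
Qed.

Lemma exists_orth2 (a b : vec) : exists2 n : vec, n != 0 & lg c n a = 0 /\ lg c n b = 0.
Proof.
have [v v_neq0] := ker_neq0 (row_mx (G *m a) (G *m b)) isT.
rewrite mul_mx_row -row_mx0 => /eq_row_mx[va vb].
exists v^T; first by rewrite trmx_eq0.
by rewrite /lg trmxK -!mulmxA va vb mxE.
Qed.

Variable u : vec.
Hypothesis u_timelike : timelike c u.

Lemma lg_uu_neq0 : lg c u u != 0.
Proof. by rewrite lt_eqF. Qed.

Lemma orth_timelike_eq0 v : lg c v u = 0 -> lg c v v <= 0 -> v = 0.
Proof.
move: u_timelike; rewrite /timelike !lgE => hu hvu hvv.
by have [? ? ? ?] := orth_timelike_coord_eq0 c_gt0 hu hvu hvv; apply: col4_eq0.
Qed.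

Lemma orth_timelike_gt0 v : lg c v u = 0 -> v != 0 -> 0 < lg c v v.
Proof.
move=> vu v_neq0; rewrite ltNge; apply: contra v_neq0 => vv_le0.
by rewrite (orth_timelike_eq0 vu vv_le0).
Qed.

Lemma orth_timelike_ge0 v : lg c v u = 0 -> 0 <= lg c v v.
Proof.
move=> vu; have [->|v_neq0] := eqVneq v 0; first by rewrite lg0l.
exact/ltW/orth_timelike_gt0.
Qed.

Lemma stab_orthochronous L : L^T *m G *m L = G -> L *m u = u -> 0 < L ord_max ord_max.
Proof.
move=> /lorentz_mxP LG Lu; pose e3 : vec := delta_mx i3 0.
have -> : L ord_max ord_max = (L *m e3) i3 0 by rewrite -colE mxE; congr (L _ _); apply/val_inj.
have e3e3 : lg c (L *m e3) (L *m e3) = - c ^+ 2 by rewrite LG lgE !mxE /=; ring.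
have e3u : lg c (L *m e3) u = - c ^+ 2 * u i3 0.
  by rewrite -[in LHS]Lu LG lgE !mxE /=; ring.
move: e3e3 u_timelike e3u; rewrite /timelike !lgE.
exact: timelike_coord_future c_gt0.
Qed.

Lemma stabH1 : stabH c u 1%:M.
Proof.
split; last by rewrite mul1mx.
by split; [rewrite trmx1 mul1mx mulmx1 | rewrite det1 mxE eqxx].
Qed.

Lemma stabH_reflection2 a b : lg c a u = 0 -> lg c b u = 0 -> a != 0 -> b != 0 ->
  stabH c u (reflection b *m reflection a).
Proof.
move=> au bu a_neq0 b_neq0.
have a_ns : lg c a a != 0 by rewrite gt_eqF ?orth_timelike_gt0.
have b_ns : lg c b b != 0 by rewrite gt_eqF ?orth_timelike_gt0.
have LG : (reflection b *m reflection a)^T *m G *m (reflection b *m reflection a) = G.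
  apply/lorentz_mxP => x y; rewrite -!mulmxA.
  by rewrite !(proj1 (lorentz_mxP _) (reflection_lorentz _)).
have Lu : reflection b *m reflection a *m u = u.
  rewrite -mulmxA [reflection a *m u]reflectionE au !(mulr0, mul0r, scale0r, subr0).
  by rewrite reflectionE bu !(mulr0, mul0r, scale0r, subr0).
split=> //; split=> //; split; last exact: stab_orthochronous.
by rewrite det_mulmx !det_reflection // mulrNN mulr1.
Qed.

(* The reflection in [v - y] swaps [v] and [y]; composing with the reflection
   in a normal [n] to [u] and [y] restores determinant 1 and fixes [y]. *)
Lemma stabH_sphere_transitive v y : lg c v u = 0 -> lg c y u = 0 ->
  lg c y y = lg c v v -> exists2 L, stabH c u L & L *m v = y.
Proof.
move=> vu yu yy; have [<-|y_neq_v] := eqVneq y v.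
  by exists 1%:M; [exact: stabH1 | rewrite mul1mx].
pose a := v - y.
have au : lg c a u = 0 by rewrite lgBl vu yu subrr.
have a_neq0 : a != 0 by rewrite subr_eq0 eq_sym.
have [n n_neq0 [nu ny]] := exists_orth2 u y.
exists (reflection n *m reflection a); first exact: stabH_reflection2.
have av : 2 * lg c a v / lg c a a = 1.
  have -> : 2 * lg c a v = lg c a a by rewrite !(lgBl, lgBr) (lg_sym v y) yy; ring.
  by rewrite divff // gt_eqF ?orth_timelike_gt0.
rewrite -mulmxA [reflection a *m v]reflectionE av scale1r opprB addrC subrK.
by rewrite reflectionE ny !(mulr0, mul0r, scale0r, subr0).
Qed.

Definition ucoord (w : vec) : R := lg c w u / lg c u u.
Definition uperp (w : vec) : vec := w - ucoord w *: u.

Lemma lg_uperp w : lg c (uperp w) u = 0.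
Proof. by rewrite lgBl lgZl divfK ?subrr ?lg_uu_neq0. Qed.

Lemma uperp_add_coord w : w = uperp w + ucoord w *: u.
Proof. by rewrite subrK. Qed.

Lemma uperp_eq0 w : uperp w = 0 -> span_line u w.
Proof. by move/eqP; rewrite subr_eq0 => /eqP ->; exists (ucoord w). Qed.

Section InvariantSubgroup.
Variable T : vec -> Prop.
Hypothesis T0 : T 0.
Hypothesis TB : forall x y, T x -> T y -> T (x - y).
Hypothesis TL : forall L z, stabH c u L -> T z -> T (L *m z).

Lemma inv_subgroupD x y : T x -> T y -> T (x + y).
Proof. by move=> Tx Ty; have := TB Tx (TB T0 Ty); rewrite sub0r opprK. Qed.

Lemma inv_subgroupMn z m : T z -> T (z *+ m).
Proof.
by move=> Tz; elim: m => [|m IH]; rewrite ?mulr0n // mulrS; apply: inv_subgroupD.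
Qed.

Lemma inv_subgroup_sphere w y : T w -> lg c y u = 0 ->
  lg c y y = lg c (uperp w) (uperp w) -> T (y - uperp w).
Proof.
move=> Tw yu yy; have [L SL Lw] := stabH_sphere_transitive (lg_uperp w) yu yy.
have Lw' : L *m w = y + ucoord w *: u.
  by rewrite {1}(uperp_add_coord w) mulmxDr -scalemxAr Lw SL.2.
have := TB (TL SL Tw) Tw; rewrite Lw' {2}(uperp_add_coord w).
by rewrite opprD addrACA subrr addr0.
Qed.

(* [t] is the difference of the two points [k n +- t/2] of the sphere through
   [uperp w], where [n] is orthogonal to [u] and [t]. *)
Lemma inv_subgroup_ball w t : T w -> lg c t u = 0 ->
  lg c t t <= 4 * lg c (uperp w) (uperp w) -> T t.
Proof.
move=> Tw tu tt_le; set r := lg c (uperp w) _ in tt_le.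
have [n n_neq0 [nu nt]] := exists_orth2 u t.
have nn_gt0 := orth_timelike_gt0 nu n_neq0.
pose k := Num.sqrt ((r - lg c t t / 4) / lg c n n).
have kk : k ^+ 2 * lg c n n = r - lg c t t / 4.
  rewrite sqr_sqrtr ?divfK ?gt_eqF // divr_ge0 ?(ltW nn_gt0) // subr_ge0.
  by rewrite ler_pdivrMr // mulrC.
have tn : lg c t n = 0 by rewrite lg_sym.
have sphere (e : R) : e ^+ 2 = 1 -> T ((e / 2) *: t + k *: n - uperp w).
  move=> e2; apply: inv_subgroup_sphere => //.
    by rewrite lgDl !lgZl tu nu !mulr0 addr0.
  rewrite -/r !(lgDl, lgDr, lgZl, lgZr) nt tn -[r](subrK (lg c t t / 4)) -kk.
  transitivity (e ^+ 2 * lg c t t / 4 + k ^+ 2 * lg c n n); first by field.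
  by rewrite e2 mul1r addrC.
have N1_sq : (- 1 : R) ^+ 2 = 1 by rewrite sqrrN expr1n.
have := TB (sphere 1 (expr1n _ _)) (sphere (- 1) N1_sq).
have -> // : (1 / 2) *: t + k *: n - uperp w - ((- 1 / 2) *: t + k *: n - uperp w) = t.
by apply/matrixP => i j; rewrite !mxE; field.
Qed.

Lemma inv_subgroup_perp w : T w -> uperp w != 0 -> forall t, lg c t u = 0 -> T t.
Proof.
move=> Tw w_neq0 t tu; pose r := lg c (uperp w) (uperp w).
have r_gt0 : 0 < r := orth_timelike_gt0 (lg_uperp w) w_neq0.
have q_ge0 : 0 <= lg c t t / (4 * r).
  by rewrite divr_ge0 ?orth_timelike_ge0 // ltW // mulr_gt0.
have := archi_boundP q_ge0; set m := Num.bound _ => tt_lt.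
pose M : R := m.+1%:R.
have M_gt0 : 0 < M by rewrite ltr0n.
have -> : t = (M^-1 *: t) *+ m.+1 by rewrite -scaler_nat scalerA divff ?gt_eqF ?scale1r.
apply/inv_subgroupMn/(inv_subgroup_ball Tw); first by rewrite lgZl tu mulr0.
rewrite ltr_pdivrMr ?mulr_gt0 // in tt_lt.
have m_le : m%:R <= M * M.
  by rewrite (@le_trans _ _ M) ?ler_nat // ler_peMl ?(ltW M_gt0) // ler1n.
rewrite lgZl lgZr mulrA -invfM mulrC ler_pdivrMr ?mulr_gt0 //.
by rewrite (le_trans (ltW tt_lt)) // [_ * (M * M)]mulrC ler_pM2r ?mulr_gt0.
Qed.

Lemma inv_subgroup_dichotomy :
  (forall w, T w -> span_line u w) \/ (forall t, lg c t u = 0 -> T t).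
Proof.
have [[w [Tw w_neq0]]|no_w] := pselect (exists w, T w /\ uperp w != 0).
  by right; apply: inv_subgroup_perp Tw w_neq0.
left=> w Tw; apply: uperp_eq0; have [//|w_neq0] := eqVneq (uperp w) 0.
by case: no_w; exists w.
Qed.

End InvariantSubgroup.

Lemma PX_translation b : PX c u (fun x => x + b).
Proof. by exists 1%:M; split; [exact: stabH1 | exists b => x; rewrite mul1mx]. Qed.

Lemma PX_mulmx L : stabH c u L -> PX c u (mulmx L).
Proof. by exists L; split=> //; exists 0 => x; rewrite addr0. Qed.

Section Classification.
Variable E : vec -> vec -> Prop.
Hypothesis E_equiv : is_equivalence E.

Lemma translation_invariant_classE : (forall b x y, E x y -> E (x + b) (y + b)) ->
  forall x y, E x y <-> E 0 (y - x).
Proof.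
move=> Etr x y; split=> [/(Etr (- x))|/(Etr x)]; first by rewrite subrr.
by rewrite add0r subrK.
Qed.

Lemma PX_invariant_classes : invariant_rel (PX c u) E ->
  exists H : R -> Prop, additive_subgroup H /\
    ((forall x y, E x y <-> exists h, H h /\ y = x + h *: u) \/
     (forall x y, E x y <-> exists v h, lg c v u = 0 /\ H h /\ y = x + (v + h *: u))).
Proof.
have [Erefl [Esym Etrans]] := E_equiv; move=> Einv.
have classE := translation_invariant_classE (fun b => Einv _ (PX_translation b)).
pose T := E 0.
have T0 : T 0 by [].
have TB x y : T x -> T y -> T (x - y).
  by move=> Tx Ty; apply/(classE y x); apply: Etrans (Esym _ _ Ty) Tx.
have TL L z : stabH c u L -> T z -> T (L *m z).
  by move=> SL /(Einv _ (PX_mulmx SL)); rewrite mulmx0.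
exists (fun h => T (h *: u)); split.
  by split=> [|a b Ta Tb]; rewrite ?scale0r // scalerBl; apply: TB.
have [Tline|Tperp] := inv_subgroup_dichotomy T0 TB TL; [left | right] => x y.
  rewrite classE; split=> [Tyx|[h [Th ->]]]; last by rewrite addrC addKr.
  have [h yx] := Tline _ Tyx.
  by exists h; rewrite -yx; split=> //; rewrite addrC subrK.
rewrite classE; split=> [Tyx|[v [h [vu [Th ->]]]]].
  exists (uperp (y - x)), (ucoord (y - x)); split; first exact: lg_uperp.
  split; last by rewrite -uperp_add_coord addrC subrK.
  by have := TB _ _ Tyx (Tperp _ (lg_uperp (y - x))); rewrite /uperp opprB addrC subrK.
by rewrite addrC addKr; apply: inv_subgroupD => //; apply: Tperp.
Qed.

End Classification.

Lemma line_classes_PX_invariant (E : vec -> vec -> Prop) (H : R -> Prop) :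
  (forall x y, E x y <-> exists h, H h /\ y = x + h *: u) -> invariant_rel (PX c u) E.
Proof.
move=> EH f [L [[_ Lu] [b fE]]] x y /EH[h [Hh ->]]; apply/EH.
by exists h; rewrite !fE mulmxDr -scalemxAr Lu addrAC.
Qed.

Lemma hyperplane_classes_PX_invariant (E : vec -> vec -> Prop) (H : R -> Prop) :
  (forall x y, E x y <-> exists v h, lg c v u = 0 /\ H h /\ y = x + (v + h *: u)) ->
  invariant_rel (PX c u) E.
Proof.
move=> EH f [L [[[LG _] Lu] [b fE]]] x y /EH[v [h [vu [Hh ->]]]]; apply/EH.
exists (L *m v), h; split; first by rewrite -Lu (proj1 (lorentz_mxP _) LG).
by rewrite !fE !mulmxDr -scalemxAr Lu addrAC.
Qed.

Lemma span_line_mulmx (M : 'M[R]_4) k : k != 0 -> M *m u = k *: u ->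
  forall y, (exists v, span_line u v /\ y = M *m v) <-> span_line u y.
Proof.
move=> k_neq0 Mu y; split=> [[_ [[t ->] ->]]|[t ->]].
  by exists (t * k); rewrite -scalemxAr Mu scalerA mulrC.
exists ((t / k) *: u); split; first by exists (t / k).
by rewrite -scalemxAr Mu scalerA divfK.
Qed.

Lemma PX_CPX f : PX c u f -> CPX c u f.
Proof.
move=> [L [[LP Lu] fE]]; exists L; split=> //; split.
  by exists 1; split=> //; exists L; rewrite scale1r.
by apply: (span_line_mulmx (k := 1)); rewrite ?oner_eq0 ?scale1r.
Qed.

Lemma CPX_scale mu : 0 < mu -> CPX c u (fun x => mu *: x).
Proof.
move=> mu_gt0; exists (mu *: 1%:M); split.
  split; first by exists mu; split=> //; exists 1%:M; split=> //; exact: stabH1.1.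
  by apply: (@span_line_mulmx _ mu); rewrite ?gt_eqF // -scalemxAl mul1mx.
by exists 0 => x; rewrite addr0 -scalemxAl mul1mx.
Qed.

Lemma scale_u_inj s h v : lg c v u = 0 -> s *: u = v + h *: u -> s = h.
Proof.
move=> vu /(congr1 (lg c ^~ u)); rewrite lgDl vu add0r !lgZl.
exact/mulIf/lg_uu_neq0.
Qed.

Lemma additive_subgroup_pscale_dichotomy (H : R -> Prop) : additive_subgroup H ->
  (forall mu h, 0 < mu -> H h -> H (mu * h)) ->
  (forall h, H h -> h = 0) \/ (forall h, H h).
Proof.
move=> [H0 HB] HZ.
have [[h0 [Hh0 h0_neq0]]|no_h] := pselect (exists h0, H h0 /\ h0 != 0); last first.
  left=> h Hh; have [//|h_neq0] := eqVneq h 0.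
  by case: no_h; exists h.
right=> t; rewrite -(divfK h0_neq0 t); have [q_gt0|q_lt0|->] := ltrgt0P (t / h0).
- exact: HZ.
- have nq_gt0 : 0 < - (t / h0) by rewrite oppr_gt0.
  by have := HB _ _ H0 (HZ _ _ nq_gt0 Hh0); rewrite mulNr sub0r opprK.
- by rewrite mul0r.
Qed.

Lemma CPX_invariant_synchrony E : is_equivalence E -> invariant_rel (CPX c u) E ->
  ~ trivial_rel E -> ~ worldline_rel u E -> forall x y, E x y <-> synchrony c u x y.
Proof.
move=> E_equiv Einv Entriv Enwl.
have [H [[H0 HB] classes]] :=
  PX_invariant_classes E_equiv (fun f Pf => Einv f (PX_CPX Pf)).
have E0u s : E 0 (s *: u) <-> H s.
  case: classes => EH; rewrite EH.
    split=> [[h [Hh /(scale_u_inj (lg0l u)) ->]] //|Hs].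
    by exists s; rewrite add0r.
  split=> [[v [h [vu [Hh]]]]|Hs]; first by rewrite add0r => /(scale_u_inj vu) ->.
  by exists 0, s; rewrite lg0l !add0r.
have HZ mu h : 0 < mu -> H h -> H (mu * h).
  move=> mu_gt0 /E0u /(Einv _ (CPX_scale mu_gt0)).
  by rewrite scaler0 scalerA => /E0u.
have [Hnull|Hall] := additive_subgroup_pscale_dichotomy (conj H0 HB) HZ;
  case: classes => EH.
- case: Entriv; right=> x y; rewrite EH.
  split=> [[h [/Hnull -> ->]]|->]; first by rewrite scale0r addr0.
  by exists 0; rewrite scale0r addr0.
- move=> x y; rewrite EH /synchrony; split=> [[v [h [vu [/Hnull -> ->]]]]|xy].
    by rewrite scale0r addr0 opprD addNKr lgNl vu oppr0.
  exists (y - x), 0; split; first by rewrite -opprB lgNl xy oppr0.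
  by split=> //; rewrite scale0r addr0 addrC subrK.
- by case: Enwl => x y; rewrite EH; split=> [[h [_ ->]]|[h ->]]; exists h.
- case: Entriv; left=> x y; apply/EH.
  exists (uperp (y - x)), (ucoord (y - x)); split; first exact: lg_uperp.
  by split=> //; rewrite -uperp_add_coord addrC subrK.
Qed.

Lemma lg_scale_lorentz mu (L : 'M[R]_4) x y : L^T *m G *m L = G ->
  lg c ((mu *: L) *m x) ((mu *: L) *m y) = mu ^+ 2 * lg c x y.
Proof. by move=> /lorentz_mxP LG; rewrite -!scalemxAl lgZl lgZr LG mulrA. Qed.

Lemma synchrony_CPX_invariant : invariant_rel (CPX c u) (synchrony c u).
Proof.
move=> f [_ [[[mu [mu_gt0 [L [[LG _] ->]]]] Mline] [b fE]]] x y xy.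
rewrite /synchrony !fE opprD addrACA subrr addr0 -mulmxBr.
have [k Mu] : span_line u (mu *: L *m u).
  by apply/Mline; exists u; split=> //; exists 1; rewrite scale1r.
have k_neq0 : k != 0.
  apply: contraTneq (lg_uu_neq0) => k0.
  have := lg_scale_lorentz mu u u LG; rewrite Mu k0 scale0r lg0l => /esym/eqP.
  by rewrite mulf_eq0 expf_eq0 /= (gt_eqF mu_gt0) negbK.
apply: (mulfI k_neq0); rewrite mulr0 -lgZr -Mu lg_scale_lorentz //.
by rewrite xy mulr0.
Qed.

Lemma synchrony_nontrivial : ~ trivial_rel (synchrony c u).
Proof.
case=> [total|identity].
  have := total 0 u; rewrite /synchrony sub0r lgNl => /eqP.
  by rewrite oppr_eq0 (negbTE lg_uu_neq0).
have [n n_neq0 [nu _]] := exists_orth2 u u.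
have /identity n0 : synchrony c u n 0 by rewrite /synchrony subr0.
by rewrite n0 eqxx in n_neq0.
Qed.

Lemma synchrony_not_worldline : ~ worldline_rel u (synchrony c u).
Proof.
move=> worldline; have [n n_neq0 [nu _]] := exists_orth2 u u.
have /worldline[t] : synchrony c u 0 n by rewrite /synchrony sub0r lgNl nu oppr0.
rewrite add0r => nE; have := nu; rewrite nE lgZl => /eqP.
rewrite mulf_eq0 (negbTE lg_uu_neq0) orbF => /eqP t0.
by rewrite nE t0 scale0r eqxx in n_neq0.
Qed.

End Minkowski.

Theorem theorem3p17 (R : realType) (c : R) (hc : 0 < c) (u : 'cV[R]_4)
    (hu : timelike c u) :
  (forall E : 'cV[R]_4 -> 'cV[R]_4 -> Prop, is_equivalence E ->
     (invariant_rel (PX c u) E <->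
      exists H : R -> Prop, additive_subgroup H /\
        ((forall x y, E x y <-> exists h, H h /\ y = x + h *: u) \/
         (forall x y, E x y <->
            exists v h, lg c v u = 0 /\ H h /\ y = x + (v + h *: u))))) /\
  (forall E : 'cV[R]_4 -> 'cV[R]_4 -> Prop, is_equivalence E ->
     ((invariant_rel (CPX c u) E /\ ~ trivial_rel E /\ ~ worldline_rel u E) <->
      (forall x y, E x y <-> synchrony c u x y))).
Proof.
split=> E E_equiv; split.
- exact: PX_invariant_classes.
- by case=> H [_ [/line_classes_PX_invariant|/hyperplane_classes_PX_invariant]].
- by case=> Einv [Entriv Enwl]; apply: CPX_invariant_synchrony.
- move=> ES; have -> : E = synchrony c u by rewrite predeq2E.
  split; first exact: synchrony_CPX_invariant.
  by split; [exact: synchrony_nontrivial | exact: synchrony_not_worldline].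
Qed.
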